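(* Suppose the $L$-smoothness assumption holds and let $\{w_t\}_{t\ge0}$, $\{v_t\}_{t\ge0}$, $\{\hat D_t\}_{t\ge0}$ be generated by {\tt Scaled SARAH} with any step-size $\eta>0$. Then for every $t\ge0$, $$P(w_{t+1})\le P(w_t)+\frac{\eta}{2\alpha}\|\nabla P(w_t)-v_t\|^2-\left(\frac1{2\eta}-\frac{L}{2\alpha}\right)\|w_{t+1}-w_t\|^2_{\hat D_t}-\frac{\eta}{2}\|\nabla P(w_t)\|^2_{\hat D_t^{-1}}.$$
   Context: $P=\frac1n\sum_{i=1}^nf_i$ with $f_i:\mathbb{R}^d\to\mathbb{R}$. $L$-smoothness assumption: each $f_i$ and $P$ are twice differentiable with $L$-Lipschitz gradients. $\|x\|_D^2=x^TDx$ for positive definite $D$. For $J\subseteq[n]$, $\nabla^2P_J(w)=\frac1{|J|}\sum_{j\in J}\nabla^2 f_j(w)$; $\odot$ is the Hadamard product; $\mathrm{diag}(x)$ is the diagonal matrix with the entries of $x$. Preconditioner (parameters $\alpha>0$, $\beta\in(0,1)$, $m\ge1$): $D_0=\frac1m\sum_{j=1}^m\mathrm{diag}(z_j\odot\nabla^2P_{\mathcal{J}_j}(w_0)z_j)$, $D_t=\beta D_{t-1}+(1-\beta)\mathrm{diag}(z_t\odot\nabla^2P_{\mathcal{J}_t}(w_t)z_t)$ for $t\ge1$, with independent Rademacher vectors $z$ and random index sets $\mathcal{J}\subseteq[n]$; $\hat D_t$ diagonal with $(\hat D_t)_{ii}=\max\{\alpha,|(D_t)_{ii}|\}$. {\tt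 Scaled SARAH} (input $w_0$, $\eta$, $p\in(0,1]$): $v_0=\nabla P(w_0)$; for $t\ge0$: $w_{t+1}=w_t-\eta\hat D_t^{-1}v_t$; draw $i_{t+1}$ uniformly from $[n]$; with probability $p$, $v_{t+1}=\nabla P(w_{t+1})$, otherwise $v_{t+1}=v_t+\nabla f_{i_{t+1}}(w_{t+1})-\nabla f_{i_{t+1}}(w_t)$; update $\hat D_{t+1}$. *)

From HB Require Import structures.
From mathcomp Require Import all_boot all_order all_algebra.
From mathcomp Require Import all_classical all_reals all_analysis.
Set Implicit Arguments. Unset Strict Implicit. Unset Printing Implicit Defensive.
Import Order.TTheory GRing.Theory Num.Theory.
Import numFieldNormedType.Exports.
Local Open Scope ring_scope.

Section Defs.
Variables (R : realType) (d : nat).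
Notation vec := 'rV[R]_d.

Definition ebasis (j : 'I_d) : vec := delta_mx 0 j.

Definition grad (f : vec -> R) (x : vec) : vec := \row_j ('d f x) (ebasis j).

Definition hess (f : vec -> R) (x : vec) : 'M[R]_d :=
  \matrix_(i, j) ('d (fun y => grad f y 0 i) x) (ebasis j).

Definition twice_diff (f : vec -> R) : Prop :=
  (forall x, differentiable f x) /\
  (forall i : 'I_d, forall x, differentiable (fun y => grad f y 0 i) x).

Definition sqnorm (x : vec) : R := \sum_i x 0 i ^+ 2.
Definition enorm (x : vec) : R := Num.sqrt (sqnorm x).

(* ||x||_D^2 = x^T diag(dg) x, for a diagonal matrix given by its diagonal dg *)
Definition dnorm2 (dg x : vec) : R := \sum_i dg 0 i * x 0 i ^+ 2.

Definition lipschitz_grad (L : R) (f : vec -> R) : Prop :=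
  forall x y, enorm (grad f x - grad f y) <= L * enorm (x - y).

(* diag(z ⊙ (H z)) represented by its diagonal *)
Definition hvp_diag (H : 'M[R]_d) (z : vec) : vec :=
  \row_i (z 0 i * \sum_j H i j * z 0 j).

Definition rademacher (z : vec) : Prop := forall i, z 0 i = 1 \/ z 0 i = -1.

Definition clipD (alpha : R) (D : vec) : vec := \row_i Num.max alpha `|D 0 i|.

End Defs.

Definition avgP (R : realType) (d n : nat) (f : 'I_n -> 'rV[R]_d -> R) (x : 'rV[R]_d) : R :=
  n%:R^-1 * \sum_i f i x.

Definition hessJ (R : realType) (d n : nat) (f : 'I_n -> 'rV[R]_d -> R) (J : {set 'I_n})
  (x : 'rV[R]_d) : 'M[R]_d :=
  (#|J|%:R)^-1 *: \sum_(j in J) hess (f j) x.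

(* The step w_{t+1} - w_t = -eta D^-1 v_t is plugged into the quadratic upper
   bound P(x + s) <= P(x) + <grad P(x), s> + L/2 ||s||^2 of an L-smooth function.
   What remains splits into one scalar inequality per coordinate, and each holds
   because the preconditioner entries satisfy D_ii >= alpha. *)
From HB Require Import structures.
From mathcomp Require Import all_boot all_order all_algebra.
From mathcomp Require Import all_classical all_reals all_analysis.
From mathcomp Require Import ring lra.
Import Order.TTheory GRing.Theory Num.Theory.
Import numFieldNormedType.Exports.
Set Implicit Arguments. Unset Strict Implicit.
Local Open Scope ring_scope.

Section SmoothDescent.
Variables (R : realType) (d : nat).
Notation vec := 'rV[R]_d.
Implicit Types (x y s a : vec) (f P : vec -> R).

Definition dotr x y : R := \sum_j x 0 j * y 0 j.

Lemma dotrBr s x y : dotr s (x - y) = dotr s x - dotr s y.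
Proof. by rewrite /dotr -sumrB; apply: eq_bigr => j _; rewrite !mxE mulrBr. Qed.

Lemma sqnorm_ge0 x : 0 <= sqnorm x.
Proof. by apply: sumr_ge0 => j _; apply: sqr_ge0. Qed.

Lemma sqnorm_eq0 x : (sqnorm x == 0) = (x == 0).
Proof.
apply/eqP/eqP => [x0|->]; last by rewrite /sqnorm big1 // => j _; rewrite mxE expr0n.
apply/matrixP => i j; rewrite ord1 mxE; apply/eqP; rewrite -sqrf_eq0; apply/eqP.
exact: (psumr_eq0P (fun j _ => sqr_ge0 (x 0 j)) x0).
Qed.

Lemma sqnormZ (c : R) x : sqnorm (c *: x) = c ^+ 2 * sqnorm x.
Proof. by rewrite /sqnorm mulr_sumr; apply: eq_bigr => j _; rewrite mxE exprMn. Qed.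

Lemma sqr_enorm x : enorm x ^+ 2 = sqnorm x.
Proof. by rewrite sqr_sqrtr ?sqnorm_ge0. Qed.

Lemma dotr_le_sqnorm (K : R) s a :
  0 <= K -> sqnorm a <= K ^+ 2 * sqnorm s -> dotr s a <= K * sqnorm s.
Proof.
rewrite le0r => /orP[/eqP-> | K_gt0] a_le.
  have /eqP-> : a == 0.
    by rewrite -sqnorm_eq0 eq_le sqnorm_ge0 andbT; move: a_le; rewrite expr0n mul0r.
  by rewrite mul0r /dotr big1 // => j _; rewrite mxE mulr0.
(* AM-GM coordinatewise: 2 K s_j a_j <= a_j^2 + K^2 s_j^2 *)
have amgm : K * (2 * dotr s a) <= sqnorm a + K ^+ 2 * sqnorm s.
  rewrite /dotr /sqnorm !mulr_sumr -big_split /=; apply: ler_sum => j _.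
  have := sqr_ge0 (a 0 j - K * s 0 j); nra.
have := sqnorm_ge0 s; nra.
Qed.

Lemma lipschitz_grad_ge0 (L : R) f x : x != 0 -> lipschitz_grad L f -> 0 <= L.
Proof.
move=> x_neq0 /(_ x 0); rewrite subr0 => lip.
have x_gt0 : 0 < enorm x by rewrite sqrtr_gt0 lt_def sqnorm_eq0 x_neq0 sqnorm_ge0.
by rewrite -(pmulr_lge0 _ x_gt0) (le_trans (sqrtr_ge0 _) lip).
Qed.

Lemma lipschitz_grad_sqnorm (L : R) f x y : lipschitz_grad L f ->
  sqnorm (grad f x - grad f y) <= L ^+ 2 * sqnorm (x - y).
Proof.
move=> /(_ x y) lip; rewrite -!sqr_enorm -exprMn.
by rewrite ler_sqr ?nnegrE ?sqrtr_ge0 // (le_trans (sqrtr_ge0 _) lip).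
Qed.

Lemma diff_gradE f x s : 'd f x s = dotr s (grad f x).
Proof.
rewrite {1}(matrix_sum_delta s) big_ord1 linear_sum; apply: eq_bigr => j _.
by rewrite linearZ /= /grad mxE.
Qed.

Lemma is_derive_line P x s (tau : R) : (forall y, differentiable P y) ->
  is_derive tau 1 (fun u : R => P (x + u *: s)) (dotr s (grad P (x + tau *: s))).
Proof.
move=> dP; set x' := x + tau *: s.
have shiftE : (fun h : R => h^-1 *: (((fun u : R => P (x + u *: s)) \o shift tau) (h *: 1) - P x'))
  = (fun h : R => h^-1 *: ((P \o shift x') (h *: s) - P x')).
  apply/funext => h /=; congr (_ *: (P _ - _)).
  by rewrite scalerDl /GRing.scale /= mulr1 addrCA addrA.
apply: DeriveDef; first by rewrite /derivable shiftE; exact: diff_derivable.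
by rewrite /derive shiftE -/(derive P _ s) deriveE // diff_gradE.
Qed.

Lemma lipschitz_grad_descent (L : R) P x s :
  (forall y, differentiable P y) -> lipschitz_grad L P ->
  P (x + s) <= P x + dotr s (grad P x) + L / 2 * sqnorm s.
Proof.
move=> dP lipP; have [->|s_neq0] := eqVneq s 0.
  by rewrite addr0 /dotr /sqnorm !big1 ?mulr0 ?addr0 // => j _; rewrite mxE ?mul0r ?expr0n.
have L_ge0 := lipschitz_grad_ge0 s_neq0 lipP.
set c := dotr s (grad P x); set k := L / 2 * sqnorm s.
set psi := (fun u : R => P (x + u *: s)) - cst c * id - cst k * id ^+ 2.
have psi' (tau : R) : is_derive tau 1 psi (dotr s (grad P (x + tau *: s)) - c - k * (2 * tau)).
  (* [is_derive_eq] picks this up by instance search *)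
  have line_deriv := is_derive_line x s tau dP.
  apply: is_derive_eq.
  by rewrite !scaler0 !addr0 /= expr1 /GRing.scale /= !mulr1.
have [|t /andP[t_gt0 _] psi10] := MVT ltr01 (fun u _ => psi' u).
  by apply: derivable_within_continuous => u _; exact: (@ex_derive _ _ _ _ _ _ _ (psi' u)).
have psi'_le0 : dotr s (grad P (x + t *: s)) - c - k * (2 * t) <= 0.
  have kE : k * (2 * t) = L * t * sqnorm s.
    by rewrite /k mulrACA divfK ?pnatr_eq0 // [sqnorm s * t]mulrC mulrA.
  rewrite kE /c -dotrBr subr_le0; apply: dotr_le_sqnorm; first by rewrite mulr_ge0 // ltW.
  have := lipschitz_grad_sqnorm (x + t *: s) x lipP.
  by rewrite [_ - x]addrC addKr sqnormZ mulrA -exprMn.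
have psi1 : psi 1 = P (x + s) - c - k.
  by rewrite /psi !fctE /= scale1r mulr1 expr1n mulr1.
have psi0 : psi 0 = P x.
  by rewrite /psi !fctE /= scale0r addr0 mulr0 expr0n /= mulr0 !subr0.
have : psi 1 <= psi 0 by rewrite -subr_le0 psi10 subr0 mulr1.
by rewrite psi1 psi0 !lerBlDr addrAC.
Qed.

End SmoothDescent.

Lemma scaled_step_coord_le (R : realFieldType) (al eta L dh g v : R) :
  0 < al -> al <= dh -> 0 < eta -> 0 <= L ->
  - (eta * (v / dh)) * g + L / 2 * (- (eta * (v / dh))) ^+ 2 <=
  eta / (2 * al) * (g - v) ^+ 2 - (1 / (2 * eta) - L / (2 * al)) * (dh * (- (eta * (v / dh))) ^+ 2)
  - eta / 2 * (dh^-1 * g ^+ 2).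
Proof.
move=> al_gt0 al_le eta_gt0 L_ge0.
have dh_gt0 : 0 < dh by apply: lt_le_trans al_le.
rewrite -subr_ge0 [X in 0 <= X](_ : _ = (al^-1 - dh^-1) *
    (eta / 2 * ((g - v) ^+ 2 + L * eta * (v ^+ 2 / dh)))); last first.
  by field; rewrite !gt_eqF.
apply: mulr_ge0; first by rewrite subr_ge0 lef_pV2 ?posrE.
apply: mulr_ge0; first by rewrite divr_ge0 // ltW.
apply: addr_ge0; first exact: sqr_ge0.
by apply: mulr_ge0; [rewrite mulr_ge0 // ltW | rewrite divr_ge0 ?sqr_ge0 // ltW].
Qed.

Theorem lemma2 (R : realType) (d n m : nat) (f : 'I_n -> 'rV[R]_d -> R) (L : R)
  (alpha beta eta p : R)
  (* realizations of the random quantities *)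
  (z0 : 'I_m -> 'rV[R]_d) (J0 : 'I_m -> {set 'I_n})
  (z : nat -> 'rV[R]_d) (J : nat -> {set 'I_n})
  (idx : nat -> 'I_n) (coin : nat -> bool)
  (* generated sequences *)
  (w v D : nat -> 'rV[R]_d) :
  (0 < n)%N ->
  (* L-smoothness assumption *)
  (forall i, twice_diff (f i) /\ lipschitz_grad L (f i)) ->
  twice_diff (avgP f) -> lipschitz_grad L (avgP f) ->
  (* parameters *)
  0 < alpha -> 0 < beta < 1 -> (1 <= m)%N -> 0 < eta -> 0 < p <= 1 ->
  (* Rademacher vectors; with p = 1 the full gradient is always taken *)
  (forall j, rademacher (z0 j)) -> (forall t, rademacher (z t)) ->
  (p = 1 -> forall t, coin t) ->
  (* preconditioner *)
  D 0%N = (m%:R)^-1 *: \sum_(j < m) hvp_diag (hessJ f (J0 j) (w 0%N)) (z0 j) ->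
  (forall t, D t.+1 = beta *: D t + (1 - beta) *: hvp_diag (hessJ f (J t.+1) (w t.+1)) (z t.+1)) ->
  (* Scaled SARAH *)
  v 0%N = grad (avgP f) (w 0%N) ->
  (forall t, w t.+1 = w t - eta *: \row_i (v t 0 i / clipD alpha (D t) 0 i)) ->
  (forall t, v t.+1 = if coin t.+1 then grad (avgP f) (w t.+1)
                      else v t + grad (f (idx t.+1)) (w t.+1) - grad (f (idx t.+1)) (w t)) ->
  forall t : nat,
    avgP f (w t.+1) <=
      avgP f (w t) + eta / (2 * alpha) * sqnorm (grad (avgP f) (w t) - v t)
      - (1 / (2 * eta) - L / (2 * alpha)) * dnorm2 (clipD alpha (D t)) (w t.+1 - w t)
      - eta / 2 * dnorm2 (\row_i (clipD alpha (D t) 0 i)^-1) (grad (avgP f) (w t)).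
Proof.
move=> _ _ [dP _] lipP alpha_gt0 _ _ eta_gt0 _ _ _ _ _ _ _ w_step _ t.
set dh := clipD alpha (D t).
have step j : (w t.+1 - w t) 0 j = - (eta * (v t 0 j / dh 0 j)).
  by rewrite w_step !mxE addrAC subrr add0r.
have := lipschitz_grad_descent (w t) (w t.+1 - w t) dP lipP.
rewrite addrC subrK => /le_trans; apply.
rewrite -!addrA lerD2l !addrA /dotr /sqnorm /dnorm2 !mulr_sumr -!sumrB -big_split /=.
apply: ler_sum => j _; rewrite !step !mxE.
apply: scaled_step_coord_le => //; first by rewrite le_max lexx.
apply: (lipschitz_grad_ge0 (x := ebasis R j) _ lipP).
by apply/eqP => /matrixP/(_ 0 j)/eqP; rewrite /ebasis !mxE !eqxx oner_eq0.
Qed.
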